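(* Let $s\in\mathbb N$, $\mathbf n<2^{2m_s+1}\mathbf 1$, and let $\Delta^{(m_s)}$ be a dyadic cube of rank $m_s$ with $\Delta^{(m_s)}\subset\widetilde F_{s-1}$. Then, for $\tau=\tau_F$, $$\int_{F_s\cap\Delta^{(m_s)}}W_{\mathbf n}\,d\mu=2^{-s}\int_{\Delta^{(m_s)}}W_{\mathbf n}\,d\tau=2^{-s}\widehat\tau_{\mathbf n}(\Delta^{(m_s)}).$$ The same holds when $F_s$, $\widetilde F_{s-1}$ and $\tau$ are replaced by $F^{\boldsymbol\pi}_s$, $\widetilde F^{\boldsymbol\pi}_{s-1}$ and $\tau^{\boldsymbol\pi}=\tau_{F^{\boldsymbol\pi}}$, for any sequence $\boldsymbol\pi=(\boldsymbol\pi_s)$ of permutations $\boldsymbol\pi_s$ of $\{0,\dots,2^{m_s}-1\}^d$.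
   Context: Fix $d\ge2$. $\mathbb G$ is the dyadic group: sequences $g=(g_k)_{k\ge0}$, $g_k\in\{0,1\}$, coordinatewise addition mod 2, product topology; $\mathbb G^d$ its $d$-th power, $\mu$ its normalized Haar measure. For $n\in\mathbb N_0$, $n=\sum_kn_k2^k$, $n_k\in\{0,1\}$. Dyadic interval of rank $k$: $\Delta^{(k)}_m=\{g: g_t=m_{k-1-t},\ 0\le t<k\}$; dyadic cube $\Delta^{(k)}_{\mathbf m}=\prod_l\Delta^{(k)}_{m^l}$. Vector order coordinatewise, $\mathbf 1=(1,\dots,1)$. Walsh functions $W_n(g)=\prod_k(-1)^{g_kn_k}$, $W_{\mathbf n}(\mathbf g)=\prod_lW_{n^l}(g^l)$; $W^{(k)}_{\mathbf n\mathbf m}$ is the constant value of $W_{\mathbf n}$ on $\Delta^{(k)}_{\mathbf m}$ ($\mathbf n,\mathbf m<2^k\mathbf 1$); $R_{k\mathbf 1}:=W_{2^k\mathbf 1}$. Quasimeasure: $\tau$ on dyadic cubes with $\tau(\Delta^{(k)}_{\mathbf m})=\sum_{\boldsymbol\sigma\in\{0,1\}^d}\tau(\Delta^{(k+1)}_{2\mathbf m+\boldsymbol\sigma})$; for a dyadic cube $\Delta$ of rank $r$, $\widehat\tau_{\mathbf n}(\Delta)=\int_\Delta W_{\mathbf n}d\tau:=\sum_{\Delta^{(k)}_{\mathbf m}\subset\Delta}W^{(k)}_{\mathbf n\mathbf m}\tau(\Delta^{(k)}_{\mathbf m})$ for any $k\ge r$ with $\mathbf n<2^k\mathbf 1$.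 For nonempty closed $E$, $\tau_E$ is the unique nonnegative quasimeasure with $\tau_E(\mathbb G^d)=1$, $\tau_E(\Delta)=0$ iff $\Delta\cap E=\emptyset$, splitting the value of a cube meeting $E$ equally among its $2^d$ children that meet $E$. Let $m_1=0$, $m_{s+1}=2(2m_s+1)$. $F_s=\bigcup_{\mathbf m,\mathbf m'<2^{m_s}\mathbf 1}\{\mathbf g\in\Delta^{(2m_s)}_{2^{m_s}\mathbf m+\mathbf m'}: R_{2m_s\mathbf 1}(\mathbf g)=W^{(m_s)}_{\mathbf m\mathbf m'}\}$, $\widetilde F_s=\bigcap_{k=1}^sF_k$, $\widetilde F_0=\mathbb G^d$, $F=\bigcap_sF_s$. $F^{\boldsymbol\pi}_s$ is defined likewise with $W^{(m_s)}_{\boldsymbol\pi_s(\mathbf m)\,\mathbf m'}$ in place of $W^{(m_s)}_{\mathbf m\mathbf m'}$; $\widetilde F^{\boldsymbol\pi}_s=\bigcap_{k=1}^sF^{\boldsymbol\pi}_k$, $\widetilde F^{\boldsymbol\pi}_0=\mathbb G^d$, $F^{\boldsymbol\pi}=\bigcap_sF^{\boldsymbol\pi}_s$. *)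

From HB Require Import structures.
From mathcomp Require Import all_boot all_order all_algebra.
From mathcomp Require Import all_classical all_reals all_analysis.
Set Implicit Arguments. Unset Strict Implicit. Unset Printing Implicit Defensive.
Import Order.TTheory GRing.Theory Num.Theory.
Local Open Scope classical_set_scope.
Local Open Scope ring_scope.

(* A point of G^d : g l t = g^l_t  (coordinate l in 'I_d, digit t). *)
Definition pt (d : nat) := 'I_d -> nat -> bool.

Definition nbit (n k : nat) : bool := odd (n %/ 2 ^ k).

(* dyadic cube Delta^(k)_m, m a vector of naturals (m^l < 2^k intended):
   g^l_t = m^l_{k-1-t} for 0 <= t < k *)
Definition cube d (k : nat) (m : 'I_d -> nat) : set (pt d) :=
  [set g | forall (l : 'I_d) (t : nat), (t < k)%N -> g l t = nbit (m l) (k - 1 - t)].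

Definition dcubes d : set (set (pt d)) := [set A | exists k m, A = cube k m].

(* G^d as a measurable space (sigma-algebra generated by the dyadic cubes,
   which is the Borel sigma-algebra of the product topology) *)
Definition Gd d := g_sigma_algebraType (@dcubes d).

Definition gadd d (g h : pt d) : pt d := fun l t => addb (g l t) (h l t).

Definition W1 {R : realType} (n : nat) (g : nat -> bool) : R :=
  \prod_(t < n) (-1) ^+ (g t && nbit n t).
Definition W {R : realType} d (n : 'I_d -> nat) (g : pt d) : R :=
  \prod_(l < d) W1 (n l) (g l).

Definition cube_pt d (k : nat) (m : 'I_d -> nat) : pt d :=
  fun l t => if (t < k)%N then nbit (m l) (k - 1 - t) else false.

Definition idx d (k : nat) := {ffun 'I_d -> 'I_(2 ^ k)}.
Definition nv d k (m : idx d k) : 'I_d -> nat := fun l => nat_of_ord (m l).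

(* W^(k)_{n m}: the (constant) value of W_n on Delta^(k)_m *)
Definition Wk {R : realType} d (k : nat) (n m : 'I_d -> nat) : R :=
  W n (cube_pt k m).

Definition Rk {R : realType} d (k : nat) (g : pt d) : R :=
  W (fun _ : 'I_d => (2 ^ k)%N) g.

(* m_1 = 0, m_{s+1} = 2(2 m_s + 1);  msq j = m_{j+1},  ms s = m_s for s >= 1 *)
Fixpoint msq (j : nat) : nat :=
  match j with 0 => 0%N | j'.+1 => (2 * (2 * msq j' + 1))%N end.
Definition ms (s : nat) : nat := msq s.-1.

Definition Fp {R : realType} d (s : nat) (p : idx d (ms s) -> idx d (ms s)) : set (pt d) :=
  [set g | exists m m' : idx d (ms s),
      cube (2 * ms s) (fun l => 2 ^ ms s * nv m l + nv m' l)%N g /\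
      Rk (R := R) (2 * ms s) g = Wk (ms s) (nv (p m)) (nv m')].

Arguments Fp {R d} s p.

Definition Fs {R : realType} d (s : nat) : set (pt d) := Fp (R := R) s id.

Definition Ftilp {R : realType} d (p : forall s, idx d (ms s) -> idx d (ms s))
  (s : nat) : set (pt d) :=
  [set g | forall k, (1 <= k <= s)%N -> Fp (R := R) k (p k) g].
Definition Ftil {R : realType} d (s : nat) : set (pt d) :=
  Ftilp (R := R) (fun s => id) s.

Definition Finfp {R : realType} d (p : forall s, idx d (ms s) -> idx d (ms s)) : set (pt d) :=
  [set g | forall s, (1 <= s)%N -> Fp (R := R) s (p s) g].
Definition Finf {R : realType} d : set (pt d) := Finfp (R := R) (fun s => id).

(* quasimeasures: tau k m = tau(Delta^(k)_m) *)
Definition child d (m : 'I_d -> nat) (sg : {ffun 'I_d -> bool}) : 'I_d -> nat :=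
  fun l => (2 * m l + sg l)%N.

Definition inrange d (k : nat) (m : 'I_d -> nat) := forall l, (m l < 2 ^ k)%N.

Definition quasimeasure {R : realType} d (tau : nat -> ('I_d -> nat) -> R) : Prop :=
  forall k m, inrange k m -> tau k m = \sum_(sg : {ffun 'I_d -> bool}) tau k.+1 (child m sg).

Definition is_tauE {R : realType} d (E : set (pt d)) (tau : nat -> ('I_d -> nat) -> R) : Prop :=
  [/\ quasimeasure tau,
      (forall k m, inrange k m -> 0 <= tau k m),
      tau 0%N (fun _ => 0%N) = 1,
      (forall k m, inrange k m -> (tau k m = 0 <-> cube k m `&` E = set0))
    & (forall k m sg sg', inrange k m ->
         cube k.+1 (child m sg) `&` E !=set0 ->
         cube k.+1 (child m sg') `&` E !=set0 ->
         tau k.+1 (child m sg) = tau k.+1 (child m sg'))].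

(* hat tau_n(Delta^(r)_{m0}) = sum over rank-k cubes inside Delta^(r)_{m0},
   computed at a rank k >= r with n < 2^k 1 *)
Definition tau_hat {R : realType} d (tau : nat -> ('I_d -> nat) -> R)
  (n : 'I_d -> nat) (r : nat) (m0 : 'I_d -> nat) (k : nat) : R :=
  \sum_(m : idx d k | `[< cube k (nv m) `<=` cube r m0 >]) Wk k n (nv m) * tau k (nv m).

From HB Require Import structures.
From mathcomp Require Import all_boot all_order all_algebra.
From mathcomp Require Import all_classical all_reals all_analysis.
From mathcomp Require Import fingroup perm.
From mathcomp Require Import zify ring.
Set Implicit Arguments. Unset Strict Implicit. Unset Printing Implicit Defensive.
Import Order.TTheory GRing.Theory Num.Theory.
Local Open Scope classical_set_scope.
Local Open Scope ring_scope.

(* Both sides are sums over the dyadic cubes of rank K = 2 m_s + 1 inside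
   Delta^(m_s), on each of which W_n is constant.  Membership in F_j depends
   only on the digits below 2 m_j + 1 and, given the lower digits, prescribes
   the parity of the d digits at position 2 m_j, so flipping one of them
   toggles it.  Hence a point satisfying finitely many of the F_j can be
   repaired at the later positions 2 m_j into a point of F, and a cube of rank
   k meets F iff its corner point satisfies the F_j with 2 m_j < k.  Following
   the equal splitting rank by rank, tau_F is 2^c(k) 2^(-kd) on such cubes,
   where c(k) counts these j: at a rank 2 m_j only half of the 2^d children
   survive.  The translation invariant probability mu gives every cube of
   rank k the mass 2^(-kd), and c(K) = s yields the factor 2^(-s). *)

Lemma nbit0 a : nbit a 0 = odd a.
Proof. by rewrite /nbit expn0 divn1. Qed.

Lemma nbitS a i : nbit a i.+1 = nbit a./2 i.
Proof. by rewrite /nbit expnS divnMA -divn2. Qed.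

Lemma nbit_small a i : (a < 2 ^ i)%N -> nbit a i = false.
Proof. by move=> lt_a; rewrite /nbit divn_small. Qed.

Lemma nbit_shift0 a (b : bool) : nbit (2 * a + b) 0 = b.
Proof. by rewrite nbit0 oddD oddM /=; case: b. Qed.

Lemma nbit_shiftS a (b : bool) i : nbit (2 * a + b) i.+1 = nbit a i.
Proof. by rewrite nbitS addnC mul2n half_bit_double. Qed.

Lemma nbit_exp2 a t : nbit (2 ^ a) t = (t == a).
Proof.
elim: t a => [|t IH] [|a].
- by rewrite nbit0.
- by rewrite nbit0 expnS oddM.
- by rewrite nbitS /nbit div0n.
- by rewrite nbitS expnS -divn2 mulKn // IH eqSS.
Qed.

Lemma eq_from_nbit k a b : (a < 2 ^ k)%N -> (b < 2 ^ k)%N ->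
  (forall i, (i < k)%N -> nbit a i = nbit b i) -> a = b.
Proof.
elim: k a b => [|k IH] a b.
  by rewrite expn0 !ltnS !leqn0 => /eqP-> /eqP->.
move=> lt_a lt_b eq_ab.
rewrite -(odd_double_half a) -(odd_double_half b) -!nbit0 eq_ab //.
congr (_ + _.*2); apply: IH => [||i lt_ik].
- by rewrite -divn2 ltn_divLR // -expnSr.
- by rewrite -divn2 ltn_divLR // -expnSr.
- by rewrite -!nbitS eq_ab.
Qed.

Fixpoint of_bits (f : nat -> bool) (k : nat) : nat :=
  if k is k'.+1 then (2 * of_bits (fun j => f j.+1) k' + f 0%N)%N else 0%N.

Lemma of_bits_lt k f : (of_bits f k < 2 ^ k)%N.
Proof.
elim: k f => [|k IH] f //=.
have := IH (fun j => f j.+1); rewrite expnS; case: (f 0%N) => /=; lia.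
Qed.

Lemma nbit_of_bits k f i : (i < k)%N -> nbit (of_bits f k) i = f i.
Proof.
elim: k f i => [|k IH] f [|i] //= lt_ik.
- by rewrite nbit_shift0.
- by rewrite nbit_shiftS IH.
Qed.

Lemma exp2_digits_inj M a b a' b' : (b < 2 ^ M)%N -> (b' < 2 ^ M)%N ->
  (2 ^ M * a + b = 2 ^ M * a' + b')%N -> a = a' /\ b = b'.
Proof.
move=> lt_b lt_b' e.
have /= := congr1 (fun v => v %/ 2 ^ M)%N e.
have /= := congr1 (fun v => v %% 2 ^ M)%N e.
rewrite !(mulnC (2 ^ M)%N) !modnMDl !modn_small // !divnMDl ?expn_gt0 //.
by rewrite !divn_small // !addn0.
Qed.

Lemma leq_msq_id n : (n <= msq n)%N.
Proof. by elim: n => //= n IH; lia. Qed.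

Lemma leq_msq : {mono msq : i j / (i <= j)%N}.
Proof. by apply: leq_mono; apply: homo_ltn => [? ? ?|i]; [exact: ltn_trans | rewrite /=; lia]. Qed.

Lemma msS s : (0 < s)%N -> ms s.+1 = (2 * (2 * ms s + 1))%N.
Proof. by case: s. Qed.

Lemma leq_ms i j : (0 < i)%N -> (0 < j)%N -> (ms i <= ms j)%N = (i <= j)%N.
Proof. by case: i => // i; case: j => // j _ _; rewrite /ms /= leq_msq. Qed.

Lemma ltn_ms i j : (0 < i)%N -> (0 < j)%N -> (ms i < ms j)%N = (i < j)%N.
Proof. by move=> i0 j0; rewrite !ltnNge leq_ms. Qed.

Lemma ms_inj i j : (0 < i)%N -> (0 < j)%N -> ms i = ms j -> i = j.
Proof.
by move=> i0 j0 e; apply/eqP; rewrite eqn_leq -(leq_ms i0 j0) -(leq_ms j0 i0) e leqnn.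
Qed.

Definition critical k : bool := [exists j : 'I_k.+1, 2 * msq j == k].

Lemma criticalP k : reflect (exists2 j, 0 < j & 2 * ms j = k)%N (critical k).
Proof.
apply: (iffP existsP) => [[j /eqP e]|[[//|j] _ e]]; first by exists j.+1.
have lt_jk : (j < k.+1)%N by rewrite -e ltnS (leq_trans (leq_msq_id j)) ?leq_pmull.
by exists (Ordinal lt_jk); apply/eqP.
Qed.

Fixpoint ncritical k : nat := if k is k'.+1 then (ncritical k' + critical k')%N else 0%N.

Lemma ncritical_noncrit k i : (forall j, (k <= j < k + i)%N -> ~~ critical j) ->
  ncritical (k + i) = ncritical k.
Proof.
elim: i => [|i IH] nc; first by rewrite addn0.
rewrite addnS /= IH => [|j /andP[le_kj lt_j]]; last by apply: nc; apply/andP; split; lia.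
by rewrite (negbTE (nc _ _)) ?addn0 //; apply/andP; split; lia.
Qed.

Lemma ncritical_ms s : (0 < s)%N -> ncritical (2 * ms s).+1 = s.
Proof.
elim: s => // -[_ _|s IH _]; first by apply/eqP; rewrite /= eqb1; apply/criticalP; exists 1%N.
have le_ms : ((2 * ms s.+1).+1 <= 2 * ms s.+2)%N by rewrite (msS (ltn0Sn s)); lia.
have -> : ncritical (2 * ms s.+2).+1
    = (ncritical (2 * ms s.+2) + critical (2 * ms s.+2))%N by [].
have -> : critical (2 * ms s.+2) by apply/criticalP; exists s.+2.
rewrite -(subnKC le_ms) ncritical_noncrit ?IH ?addn1 // => j /andP[lt_j lt_j'].
apply/criticalP => -[i i0 e]; rewrite -e subnKC // in lt_j lt_j'.
have := ltn_ms (isT : 0 < s.+1)%N i0; have := ltn_ms i0 (isT : 0 < s.+2)%N; lia.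
Qed.

Section Cubes.
Variable d : nat.
Implicit Types (g h x y : pt d) (m : 'I_d -> nat).

Definition agree k g h := forall l t, (t < k)%N -> g l t = h l t.

Lemma agree_sym k g h : agree k g h -> agree k h g.
Proof. by move=> gh l t lt_tk; rewrite gh. Qed.

Lemma agree_trans k g h x : agree k g h -> agree k h x -> agree k g x.
Proof. by move=> gh hx l t lt_tk; rewrite gh // hx. Qed.

Lemma agree_leq k k' g h : (k' <= k)%N -> agree k g h -> agree k' g h.
Proof. by move=> le_k'k gh l t lt_tk'; apply: gh; apply: leq_trans le_k'k. Qed.

Lemma cube_agreeE k m g : cube k m g <-> agree k g (cube_pt k m).
Proof. by split=> H l t lt_tk; move: (H l t lt_tk); rewrite /cube_pt lt_tk. Qed.

Lemma cube_pt_mem k m : cube k m (cube_pt k m).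
Proof. exact/cube_agreeE. Qed.

Lemma cube_agree k m g h : cube k m g -> agree k g h -> cube k m h.
Proof.
by move=> /cube_agreeE gm gh; apply/cube_agreeE; apply: agree_trans gm; apply: agree_sym.
Qed.

Lemma subset_cubeP k r m m0 : (r <= k)%N ->
  cube k m `<=` cube r m0 <-> cube r m0 (cube_pt k m).
Proof.
move=> le_rk; split; first by apply; apply: cube_pt_mem.
move=> c0 g /cube_agreeE gm; apply: cube_agree c0 _.
by apply: agree_leq le_rk _; apply: agree_sym.
Qed.

Lemma inrange_nv k (m : idx d k) : inrange k (nv m).
Proof. by move=> l; rewrite /nv ltn_ord. Qed.

Lemma nv_inj k (m1 m2 : idx d k) : nv m1 = nv m2 -> m1 = m2.
Proof. by move=> e; apply/ffunP => l; apply: val_inj; apply: (congr1 (fun f => f l) e). Qed.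

Definition cube_index k g : idx d k :=
  [ffun l => Ordinal (of_bits_lt k (fun j => g l (k - 1 - j)%N))].

Lemma cube_index_mem k g : cube k (nv (cube_index k g)) g.
Proof. by move=> l t lt_tk; rewrite /nv ffunE /= nbit_of_bits; [congr (g l _)|]; lia. Qed.

Lemma cube_inj k m m' g : inrange k m -> inrange k m' ->
  cube k m g -> cube k m' g -> m = m'.
Proof.
move=> rm rm' gm gm'; apply: funext => l.
apply: (eq_from_nbit (rm l) (rm' l)) => i lt_ik.
have := gm l (k - 1 - i)%N; have := gm' l (k - 1 - i)%N.
have -> : (k - 1 - (k - 1 - i) = i)%N by lia.
by move=> <-; [move=> <-|]; lia.
Qed.

Lemma cube_child k m sg g :
  cube k.+1 (child m sg) g <-> cube k m g /\ forall l, g l k = sg l.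
Proof.
have digit t : (t < k)%N -> (k.+1 - 1 - t = (k - 1 - t).+1)%N by lia.
have top : (k.+1 - 1 - k = 0)%N by lia.
split=> [gc|[gm gk] l t].
  split=> [l t lt_tk|l]; last by rewrite gc // top nbit_shift0.
  by rewrite gc ?digit ?nbit_shiftS //; apply: ltnW.
rewrite ltnS leq_eqVlt => /orP[/eqP->|lt_tk]; first by rewrite gk top nbit_shift0.
by rewrite gm // digit ?nbit_shiftS.
Qed.

Lemma cube_pt_child_agree k m sg : agree k (cube_pt k.+1 (child m sg)) (cube_pt k m).
Proof. by apply/cube_agreeE; have /cube_child[] := @cube_pt_mem k.+1 (child m sg). Qed.

Lemma cube_pt_child_digit k m sg l : cube_pt k.+1 (child m sg) l k = sg l.
Proof. by have /cube_child[_ ->] := @cube_pt_mem k.+1 (child m sg). Qed.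

Lemma child_half m' : child (fun l => (m' l)./2) [ffun l => odd (m' l)] = m'.
Proof. by apply: funext => l; rewrite /child ffunE addnC mul2n odd_double_half. Qed.

Lemma inrange_half k m' : inrange k.+1 m' -> inrange k (fun l => (m' l)./2).
Proof. by move=> r l; rewrite -divn2 ltn_divLR // -expnSr. Qed.

Lemma inrange_child k m sg : inrange k m -> inrange k.+1 (child m sg).
Proof. by move=> r l; rewrite /child expnS; have := r l; case: (sg l) => /=; lia. Qed.

Definition block M (a b : idx d M) : 'I_d -> nat := fun l => (2 ^ M * nv a l + nv b l)%N.

Lemma inrange_block M (a b : idx d M) : inrange (2 * M) (block a b).
Proof.
move=> l; have := inrange_nv a l; have := inrange_nv b l.
by rewrite /block mul2n -addnn expnD; move: (2 ^ M)%N => P; nia.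
Qed.

Lemma block_inj M (a b a' b' : idx d M) : block a b = block a' b' -> a = a' /\ b = b'.
Proof.
move=> e; have e' l := exp2_digits_inj (inrange_nv b l) (inrange_nv b' l)
  (congr1 (fun f => f l) e).
by split; apply: nv_inj; apply: funext => l; case: (e' l).
Qed.

Lemma cube_block_exists M g : exists a b : idx d M, cube (2 * M) (block a b) g.
Proof.
set N := cube_index (2 * M) g.
have lt_div l : (N l %/ 2 ^ M < 2 ^ M)%N.
  by rewrite ltn_divLR ?expn_gt0 // -expnD addnn -mul2n ltn_ord.
have lt_mod l : (N l %% 2 ^ M < 2 ^ M)%N by rewrite ltn_pmod ?expn_gt0.
pose a : idx d M := [ffun l => Ordinal (lt_div l)].
pose b : idx d M := [ffun l => Ordinal (lt_mod l)].
have ea l : nv a l = (N l %/ 2 ^ M)%N by rewrite /nv ffunE.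
have eb l : nv b l = (N l %% 2 ^ M)%N by rewrite /nv ffunE.
exists a, b; have -> : block a b = nv N.
  by apply: funext => l; rewrite /block ea eb mulnC -divn_eq.
exact: cube_index_mem.
Qed.

Definition flip (l0 : 'I_d) (t0 : nat) g : pt d :=
  fun l t => if (l == l0) && (t == t0) then ~~ g l t else g l t.

Lemma agree_flip l0 t0 k g : (k <= t0)%N -> agree k g (flip l0 t0 g).
Proof. by move=> le_kt l t lt_tk; rewrite /flip (_ : t == t0 = false) ?andbF //; lia. Qed.

Definition toggle (l0 : 'I_d) (sg : {ffun 'I_d -> bool}) : {ffun 'I_d -> bool} :=
  [ffun l => if l == l0 then ~~ sg l else sg l].

Lemma toggleK l0 : involutive (toggle l0).
Proof. by move=> sg; apply/ffunP => l; rewrite !ffunE; case: (l == l0); rewrite ?negbK. Qed.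

Section Signs.
Variable R : realType.

Lemma prod_sign_toggle (l0 : 'I_d) (f f' : 'I_d -> bool) :
  f' l0 = ~~ f l0 -> (forall l, l != l0 -> f' l = f l) ->
  \prod_l ((-1) ^+ f' l : R) = - \prod_l (-1) ^+ f l.
Proof.
move=> f'l0 f'l; rewrite (bigD1 l0) // [in RHS](bigD1 l0) //= f'l0.
rewrite (eq_bigr (fun l => (-1) ^+ f l)) => [|l /f'l-> //].
by case: (f l0); rewrite /= ?expr1 ?expr0 ?mulNr ?opprK ?mul1r ?mulN1r.
Qed.

Lemma sign_neq (z w : R) : z ^+ 2 = 1 -> w ^+ 2 = 1 -> (z != w) = (- z == w).
Proof.
move=> /eqP; rewrite sqrf_eq1 => /orP[]/eqP-> /eqP; rewrite sqrf_eq1;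
by move=> /orP[]/eqP->; rewrite ?opprK ?eqxx ?[1 == -1]eq_sym ?eqNr ?oner_eq0.
Qed.

Lemma card_sign_prod (l0 : 'I_d) (w : R) : w ^+ 2 = 1 ->
  #|[pred sg : {ffun 'I_d -> bool} | \prod_l (-1) ^+ sg l == w]| = (2 ^ d.-1)%N.
Proof.
move=> w2; set P := [pred sg | _].
have prod_toggle sg : \prod_l ((-1) ^+ toggle l0 sg l : R) = - \prod_l (-1) ^+ sg l.
  apply: (@prod_sign_toggle l0 sg (toggle l0 sg)) => [|l /negbTE nl];
  by rewrite ffunE ?eqxx ?nl.
have sign2 (sg : {ffun 'I_d -> bool}) : (\prod_l ((-1) ^+ sg l : R)) ^+ 2 = 1.
  by rewrite -prodrXl big1 // => l _; apply: sqrr_sign.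
have cardCP : #|[predC P]| = #|P|.
  rewrite -(fintype.card_image (can_inj (toggleK l0))); apply: eq_card => sg.
  rewrite -[in LHS](toggleK l0 sg) fintype.mem_image; last exact: can_inj (toggleK l0).
  by rewrite !inE prod_toggle sign_neq ?opprK // sqrrN.
have := cardC P; rewrite cardCP card_ffun card_bool card_ord addnn.
have d0 : (0 < d)%N := leq_ltn_trans (leq0n l0) (ltn_ord l0).
by rewrite -[in (2 ^ d)%N](prednK d0) expnS mul2n => /double_inj.
Qed.

End Signs.
End Cubes.

Section Walsh.
Variables (R : realType) (d : nat).
Implicit Types (g h x y : pt d).

Lemma W1_agree n K (g h : nat -> bool) : (n < 2 ^ K)%N ->
  (forall t, (t < K)%N -> g t = h t) -> W1 (R := R) n g = W1 n h.
Proof.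
move=> lt_n gh; apply: eq_bigr => -[t lt_tn] _ /=.
have [lt_tK|le_Kt] := ltnP t K; first by rewrite gh.
by rewrite nbit_small ?andbF //; apply: leq_trans lt_n _; rewrite leq_exp2l.
Qed.

Lemma W_agree (n : 'I_d -> nat) K g h :
  (forall l, (n l < 2 ^ K)%N) -> agree K g h -> W (R := R) n g = W n h.
Proof.
by move=> lt_n gh; apply: eq_bigr => l _; apply: W1_agree (lt_n l) _ => t; apply: gh.
Qed.

Lemma W_sqr (n : 'I_d -> nat) g : W (R := R) n g ^+ 2 = 1.
Proof.
rewrite /W -prodrXl big1 // => l _; rewrite /W1 -prodrXl big1 // => t _.
exact: sqrr_sign.
Qed.

Lemma W1_exp2 a (g : nat -> bool) : W1 (R := R) (2 ^ a) g = (-1) ^+ g a.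
Proof.
rewrite /W1 (bigD1 (Ordinal (ltn_expl a (isT : (1 < 2)%N)))) //= nbit_exp2 eqxx andbT.
rewrite big1 ?mulr1 // => -[t lt_t] /= neq_t.
have /negbTE neq_ta : t != a by apply: contra neq_t => /eqP eq_ta; apply/eqP/val_inj.
by rewrite nbit_exp2 neq_ta andbF.
Qed.

Lemma RkE k g : Rk (R := R) k g = \prod_l (-1) ^+ g l k.
Proof. by apply: eq_bigr => l _; rewrite W1_exp2. Qed.

Lemma Rk_flip l0 k g : Rk (R := R) k (flip l0 k g) = - Rk k g.
Proof.
rewrite !RkE; apply: (@prod_sign_toggle d R l0 (fun l => g l k) (fun l => flip l0 k g l k)).
  by rewrite /flip !eqxx.
by move=> l /negbTE nl; rewrite /flip nl.
Qed.

Lemma Fp_agree j (q : idx d (ms j) -> idx d (ms j)) x y :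
  agree (2 * ms j).+1 x y -> Fp (R := R) j q x -> Fp (R := R) j q y.
Proof.
move=> xy [a [b [xab Rx]]]; exists a, b; split.
  by apply: cube_agree xab _; apply: agree_leq xy.
by rewrite -Rx; apply: W_agree (agree_sym xy) => l; rewrite ltn_exp2l.
Qed.

Lemma FpE j (q : idx d (ms j) -> idx d (ms j)) x (a b : idx d (ms j)) :
  cube (2 * ms j) (block a b) x ->
  Fp (R := R) j q x <-> Rk (R := R) (2 * ms j) x = Wk (ms j) (nv (q a)) (nv b).
Proof.
move=> xab; split=> [[a' [b' [xab' ->]]]|Rx]; last by exists a, b.
by have [<- <-] := block_inj (cube_inj (inrange_block a b) (inrange_block a' b') xab xab').
Qed.

Lemma Fp_flip l0 j (q : idx d (ms j) -> idx d (ms j)) x :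
  ~ Fp (R := R) j q x -> Fp (R := R) j q (flip l0 (2 * ms j) x).
Proof.
move=> notFx; have [a [b xab]] := cube_block_exists (ms j) x.
have fab : cube (2 * ms j) (block a b) (flip l0 (2 * ms j) x).
  by apply: cube_agree xab _; apply: agree_flip.
have notRx : Rk (R := R) (2 * ms j) x != Wk (ms j) (nv (q a)) (nv b).
  by apply/eqP => /(FpE q xab).
by apply/(FpE q fab)/eqP; rewrite Rk_flip -sign_neq //; apply: W_sqr.
Qed.

End Walsh.

Section Repair.
Variables (R : realType) (d : nat) (p : forall s, idx d (ms s) -> idx d (ms s)) (l0 : 'I_d).
Arguments p : clear implicits.
Implicit Types (g h x : pt d) (m : 'I_d -> nat).

Definition admissible k g := forall i, (0 < i)%N -> (2 * ms i < k)%N -> Fp (R := R) i (p i) g.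

Lemma admissible_leq k k' g : (k' <= k)%N -> admissible k g -> admissible k' g.
Proof. by move=> le_k'k G i i0 lt_i; apply: G i0 _; apply: leq_trans le_k'k. Qed.

Lemma admissible_agree k g h : admissible k g -> agree k g h -> admissible k h.
Proof. by move=> G gh i i0 lt_i; apply: Fp_agree (G i i0 lt_i); apply: agree_leq gh. Qed.

Lemma admissible_Finfp k g h : Finfp (R := R) p h -> agree k g h -> admissible k g.
Proof.
by move=> Fh gh i i0 lt_i; apply: Fp_agree (Fh i i0); apply: agree_sym; apply: agree_leq lt_i gh.
Qed.

Lemma admissible_S_noncrit k g : ~~ critical k -> admissible k g -> admissible k.+1 g.
Proof.
move=> nc G i i0; rewrite ltnS leq_eqVlt => /orP[/eqP e|]; last exact: G.
by case/negP: nc; apply/criticalP; exists i.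
Qed.

Lemma admissible_S_crit k j g : (0 < j)%N -> (2 * ms j = k)%N ->
  admissible k.+1 g <-> admissible k g /\ Fp (R := R) j (p j) g.
Proof.
move=> j0 e; split=> [G|[G Fg] i i0].
  by split; [apply: admissible_leq G | apply: G j0 _; rewrite e].
rewrite ltnS leq_eqVlt => /orP[/eqP e'|]; last exact: G.
by have -> : i = j by apply: ms_inj => //; lia.
Qed.

Definition repair j x : pt d :=
  if `[< Fp (R := R) j (p j) x >] then x else flip l0 (2 * ms j) x.

Fixpoint repair_upto g i : pt d :=
  if i is i'.+1 then repair i (repair_upto g i') else g.

(* Digit t is final after step t + 1: later steps j only flip digits 2 m_j > t. *)
Definition repair_lim g : pt d := fun l t => repair_upto g t.+1 l t.

Lemma Fp_repair j x : Fp (R := R) j (p j) (repair j x).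
Proof. by rewrite /repair; case: asboolP => // /Fp_flip. Qed.

Lemma agree_repair j x : agree (2 * ms j) x (repair j x).
Proof. by rewrite /repair; case: asboolP => _ //; apply: agree_flip. Qed.

Lemma agree_repair_upto g i i' : (i <= i')%N ->
  agree (2 * ms i.+1) (repair_upto g i) (repair_upto g i').
Proof.
elim: i' => [|i' IH]; first by rewrite leqn0 => /eqP->.
rewrite leq_eqVlt => /orP[/eqP-> //|]; rewrite ltnS => le_ii'.
apply: agree_trans (IH le_ii') _; apply: (@agree_leq _ (2 * ms i'.+1)).
  by rewrite leq_mul2l /ms /= leq_msq.
exact: agree_repair.
Qed.

Lemma agree_repair_lim g i : agree (2 * ms i.+1) (repair_lim g) (repair_upto g i).
Proof.
move=> l t lt_t; rewrite /repair_lim.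
have [le_ti|lt_it] := leqP t.+1 i.
  by apply: agree_repair_upto le_ti _ _ _; have := leq_msq_id t.+1; rewrite /ms /=; lia.
by symmetry; apply: agree_repair_upto (ltnW lt_it) l t lt_t.
Qed.

Lemma Finfp_repair_lim g : Finfp (R := R) p (repair_lim g).
Proof.
move=> [//|j] _; apply: Fp_agree (Fp_repair j.+1 (repair_upto g j)).
apply: agree_sym; apply: (@agree_leq _ (2 * ms j.+2)); last exact: agree_repair_lim.
by rewrite (msS (ltn0Sn j)); lia.
Qed.

Lemma agree_repair_lim_admissible k g : admissible k g -> agree k g (repair_lim g).
Proof.
move=> G; suff upto i : agree k g (repair_upto g i) by move=> l t lt_t; apply: upto.
elim: i => //= i IH; rewrite /repair; case: asboolP => // notF.
have [lt_k|le_k] := ltnP (2 * ms i.+1) k.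
  by case: notF; apply: Fp_agree (agree_leq lt_k IH) (G i.+1 isT lt_k).
by apply: agree_trans IH (agree_flip _ _ le_k).
Qed.

Lemma cube_meets_FinfpP k m :
  cube k m `&` Finfp (R := R) p !=set0 <-> admissible k (cube_pt k m).
Proof.
split=> [[g [/cube_agreeE gm Fg]]|G]; first exact: admissible_Finfp Fg (agree_sym gm).
exists (repair_lim (cube_pt k m)); split; last exact: Finfp_repair_lim.
by apply: cube_agree (agree_repair_lim_admissible G); apply: cube_pt_mem.
Qed.

Lemma card_admissible_children k m : admissible k (cube_pt k m) ->
  #|[pred sg : {ffun 'I_d -> bool} | `[< admissible k.+1 (cube_pt k.+1 (child m sg)) >]]|
    = (2 ^ (d - critical k))%N.
Proof.
move=> G; have Gc sg : admissible k (cube_pt k.+1 (child m sg)).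
  by apply: admissible_agree G _; apply/agree_sym/cube_pt_child_agree.
have [/criticalP[j j0 e]|nc] := boolP (critical k); last first.
  rewrite subn0 -[in RHS](card_ord d) -card_bool -card_ffun.
  by apply: eq_card => sg; rewrite !inE; apply/asboolP; apply: admissible_S_noncrit nc (Gc sg).
have [a [b mab]] := cube_block_exists (ms j) (cube_pt k m).
rewrite subn1 -(card_sign_prod l0 (W_sqr R (nv (p j a)) (cube_pt (ms j) (nv b)))).
apply: eq_card => sg; rewrite !inE.
have cab : cube (2 * ms j) (block a b) (cube_pt k.+1 (child m sg)).
  by apply: cube_agree mab _; rewrite e; apply/agree_sym/cube_pt_child_agree.
have -> : \prod_l ((-1) ^+ sg l : R) = Rk (2 * ms j) (cube_pt k.+1 (child m sg)).
  by rewrite RkE e; apply: eq_bigr => l _; rewrite cube_pt_child_digit.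
apply/asboolP/eqP => [/(admissible_S_crit _ j0 e)[_ /(FpE R (p j) cab)] //|Rc].
by apply/(admissible_S_crit _ j0 e); split; [apply: Gc | apply/(FpE R (p j) cab)].
Qed.

End Repair.

Arguments admissible {R d}.
Arguments cube_meets_FinfpP {R d p} l0 {k m}.
Arguments card_admissible_children {R d p} l0 {k m}.

Section TauF.
Variables (R : realType) (d : nat) (p : forall s, idx d (ms s) -> idx d (ms s)) (l0 : 'I_d).
Variable tau : nat -> ('I_d -> nat) -> R.
Hypothesis tauF : is_tauE (Finfp (R := R) p) tau.

Lemma tau_not_admissible k m : inrange k m ->
  ~ admissible (R := R) p k (cube_pt k m) -> tau k m = 0.
Proof.
have [_ _ _ tau_eq0 _] := tauF; move=> rm notG; apply/(tau_eq0 k m rm).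
by apply/seteqP; split=> // g Fg; case: notG; apply/(cube_meets_FinfpP l0); exists g.
Qed.

Lemma tau_admissible k m : inrange k m -> admissible (R := R) p k (cube_pt k m) ->
  tau k m = 2 ^+ ncritical k / 2 ^+ (k * d).
Proof.
have [tau_split _ tau0 _ tau_equal] := tauF.
have e2 j : (2 : R) ^+ j != 0 by rewrite expf_neq0 // pnatr_eq0.
elim: k m => [|k IH] m' rm' Gm'.
  have -> : m' = (fun=> 0%N) by apply: funext => l; have := rm' l; rewrite expn0; lia.
  by rewrite tau0 mul0n expr0 divr1.
set m := fun l => (m' l)./2; have rm : inrange k m := inrange_half rm'.
have em' := child_half m'; rewrite -/m in em'.
have Gm : admissible (R := R) p k (cube_pt k m).
  apply: admissible_agree (admissible_leq (leqnSn k) Gm') _.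
  by rewrite -em'; apply: cube_pt_child_agree.
have tau_child sg : tau k.+1 (child m sg) =
    if `[< admissible (R := R) p k.+1 (cube_pt k.+1 (child m sg)) >] then tau k.+1 m' else 0.
  case: asboolP => G; last exact: tau_not_admissible (inrange_child sg rm) G.
  rewrite -[in RHS]em'; apply: tau_equal => //; apply/(cube_meets_FinfpP l0) => //.
  by rewrite em'.
have := tau_split k m rm; rewrite IH // (eq_bigr _ (fun sg _ => tau_child sg)).
rewrite -big_mkcond sumr_const (card_admissible_children l0 Gm).
rewrite -[tau _ _ *+ _]mulr_natr natrX.
have -> : (2 : R) ^+ (k.+1 * d) = 2 ^+ (k * d) * 2 ^+ (d - critical k) * 2 ^+ critical k.
  rewrite -!exprD; congr (_ ^+ _); have := leq_ltn_trans (leq0n l0) (ltn_ord l0).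
  by rewrite mulSn; case: (critical k) => /=; lia.
move=> /(congr1 (fun x => x / 2 ^+ (d - critical k))); rewrite mulfK // => <-.
by rewrite /= exprD; field; rewrite !e2.
Qed.

End TauF.

Section Haar.
Variables (R : realType) (d : nat) (mu : {measure set (Gd d) -> \bar R}).
Hypothesis mu1 : mu setT = 1%E.
Hypothesis mu_inv : forall (h : pt d) (A : set (Gd d)),
  measurable A -> mu [set gadd h x | x in A] = mu A.
Implicit Types (S : set (pt d)) (m : 'I_d -> nat).

Lemma measurable_cube k m : measurable (cube k m : set (Gd d)).
Proof. by apply: sub_sigma_algebra; exists k, m. Qed.

Definition determined K S := forall x y, agree K x y -> S x -> S y.

Definition cubes_of K S : seq (idx d K) :=
  [seq m <- index_enum (idx d K) | `[< S (cube_pt K (nv m)) >]].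

Lemma determined_bigsetU K S : determined K S ->
  S = \big[setU/set0]_(m <- cubes_of K S) cube K (nv m).
Proof.
move=> detS; rewrite -bigcup_seq; apply/seteqP; split=> [x Sx|x [m]].
  exists (cube_index K x); last exact: cube_index_mem.
  rewrite /= mem_filter mem_index_enum andbT; apply/asboolP.
  by apply: detS Sx; apply/cube_agreeE/cube_index_mem.
rewrite /= mem_filter => /andP[/asboolP Sm _] /cube_agreeE xm.
exact: detS (agree_sym xm) Sm.
Qed.

Lemma measurable_determined K S : determined K S -> measurable (S : set (Gd d)).
Proof.
move=> detS; rewrite (determined_bigsetU detS).
by apply: bigsetU_measurable => m _; apply: measurable_cube.
Qed.

Lemma integral_determined K S (f : pt d -> R) : determined K S ->
  (forall x y, agree K x y -> f x = f y) ->
  (\int[mu]_(x in S) (f x)%:E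
    = \sum_(m <- cubes_of K S) (f (cube_pt K (nv m)))%:E * mu (cube K (nv m)))%E.
Proof.
move=> detS detf; rewrite {1}(determined_bigsetU detS) integral_bigsetU_EFin; first last.
- apply/measurable_realfun.measurable_EFinP => mS Y mY; apply: measurableI => //.
  by apply: (@measurable_determined K) => x y xy; rewrite /preimage /= (detf x y xy).
- move=> m1 m2 _ _ [x [xm1 xm2]]; apply: nv_inj.
  exact: cube_inj (inrange_nv m1) (inrange_nv m2) xm1 xm2.
- by rewrite filter_uniq // index_enum_uniq.
- by move=> m; apply: measurable_cube.
apply: eq_bigr => m _; rewrite -integral_cst; last exact: measurable_cube.
apply: eq_integral => x /[!in_setE] /cube_agreeE xm.
by rewrite (detf _ _ xm).
Qed.

Lemma translate_cube k m :
  [set gadd (cube_pt k m) x | x in cube k (fun=> 0%N)] = cube k m.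
Proof.
have nbit_0 i : nbit 0 i = false by rewrite /nbit div0n.
apply/seteqP; split=> [_ [x x0 <-] l t lt_t|y ym].
  by rewrite /gadd x0 // nbit_0 addbF /cube_pt lt_t.
exists (gadd (cube_pt k m) y).
  by move=> l t lt_t; rewrite /gadd ym // nbit_0 /cube_pt lt_t addbb.
by apply: funext => l; apply: funext => t; rewrite /gadd addbA addbb.
Qed.

Lemma mu_cube k m : mu (cube k m) = ((2 ^+ (k * d))^-1 : R)%:E.
Proof.
have mu_cube0 m' : mu (cube k m') = mu (cube k (fun=> 0%N)).
  by rewrite -(translate_cube k m') mu_inv //; apply: measurable_cube.
rewrite mu_cube0.
have mu_fin : mu (cube k (fun=> 0%N)) \is a fin_num.
  rewrite ge0_fin_numE ?measure_ge0 // (le_lt_trans _ (ltry 1)) // -mu1.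
  by apply: (le_measure mu (mem_set (measurable_cube k _)) (mem_set measurableT)).
rewrite -(fineK mu_fin); move: (fine _) (fineK mu_fin) => r mu_r.
have := integral_determined (f := fun=> 1) (K := k) (S := setT)
  (fun _ _ _ _ => I) (fun _ _ _ => erefl).
rewrite integral_cst // mu1 mul1e (eq_bigr (fun=> r%:E)) => [|m' _]; last first.
  by rewrite mul1e mu_cube0.
rewrite sumEFin big_filter (eq_bigl xpredT) => [|m']; last exact/asboolP.
rewrite sumr_const card_ffun !card_ord -[r *+ _]mulr_natr !natrX -exprM => -[E].
have e2 : ((2 : R) ^+ (k * d)) != 0 by rewrite expf_neq0 // pnatr_eq0.
by congr (_%:E); apply: (mulIf e2); rewrite -E mulVf.
Qed.

End Haar.

Section Integral.
Variables (R : realType) (d : nat) (l0 : 'I_d) (mu : {measure set (Gd d) -> \bar R}).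
Hypothesis mu1 : mu setT = 1%E.
Hypothesis mu_inv : forall (h : pt d) (A : set (Gd d)),
  measurable A -> mu [set gadd h x | x in A] = mu A.
Variable p : forall s, idx d (ms s) -> idx d (ms s).
Arguments p : clear implicits.

Lemma integral_W_Fp_cube s (n m0 : 'I_d -> nat) (tau : nat -> ('I_d -> nat) -> R) :
  (0 < s)%N -> (forall l, (n l < 2 ^ (2 * ms s).+1)%N) -> inrange (ms s) m0 ->
  cube (ms s) m0 `<=` Ftilp (R := R) p s.-1 -> is_tauE (Finfp (R := R) p) tau ->
  (\int[mu]_(x in Fp (R := R) s (p s) `&` cube (ms s) m0) (W n x)%:E
    = ((2 ^- s) * tau_hat tau n (ms s) m0 (2 * ms s).+1)%:E)%E.
Proof.
move=> s0 lt_n rm0 sub_m0 tauF; set K := (2 * ms s).+1.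
have le_K : (ms s <= K)%N by rewrite /K; lia.
have detA : determined K (Fp (R := R) s (p s) `&` cube (ms s) m0).
  move=> x y xy [Fx cx]; split; first exact: Fp_agree xy Fx.
  exact: cube_agree cx (agree_leq le_K xy).
rewrite (integral_determined mu detA) => [|x y]; last exact: W_agree.
under eq_bigr do rewrite mu_cube // -EFinM.
rewrite sumEFin big_filter /tau_hat mulr_sumr; congr (_%:E).
rewrite [RHS]big_mkcond [LHS]big_mkcond; apply: eq_bigr => m _.
have e2 j : (2 : R) ^+ j != 0 by rewrite expf_neq0 // pnatr_eq0.
case: asboolP => [[Fm cm]|notA]; case: asboolP => [sub|notsub].
- have G : admissible (R := R) p K (cube_pt K (nv m)).
    move=> i i0 lt_i; have : (i <= s)%N by rewrite -leq_ms //; lia.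
    rewrite leq_eqVlt => /orP[/eqP-> //|lt_is].
    by apply: (sub_m0 _ cm); apply/andP; split; lia.
  rewrite (tau_admissible l0 tauF (inrange_nv m) G) ncritical_ms // /Wk.
  by field; rewrite !e2.
- by case: notsub; apply/subset_cubeP.
- rewrite (tau_not_admissible l0 tauF (inrange_nv m)) ?mulr0 // => G.
  by case: notA; split; [apply: G | apply/(subset_cubeP _ _ le_K)].
- by [].
Qed.

End Integral.

Theorem lemma5 (R : realType) (d : nat) (hd : (2 <= d)%N)
  (mu : {measure set (Gd d) -> \bar R})
  (mu1 : mu setT = 1%E)
  (mu_inv : forall (h : pt d) (A : set (Gd d)),
      measurable A -> mu [set gadd h x | x in A] = mu A) :
  (forall (s : nat) (n m0 : 'I_d -> nat) (tau : nat -> ('I_d -> nat) -> R),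
      (1 <= s)%N ->
      (forall l, (n l < 2 ^ (2 * ms s + 1))%N) ->
      inrange (ms s) m0 ->
      cube (ms s) m0 `<=` @Ftil R d s.-1 ->
      is_tauE (@Finf R d) tau ->
      (\int[mu]_(x in @Fs R d s `&` cube (ms s) m0) (W n x)%:E
        = ((2 ^- s) * tau_hat tau n (ms s) m0 (2 * ms s + 1))%:E)%E)
  /\
  (forall (pi : forall s, {perm idx d (ms s)})
          (s : nat) (n m0 : 'I_d -> nat) (tau : nat -> ('I_d -> nat) -> R),
      (1 <= s)%N ->
      (forall l, (n l < 2 ^ (2 * ms s + 1))%N) ->
      inrange (ms s) m0 ->
      cube (ms s) m0 `<=` Ftilp (R := R) (fun k => pi k) s.-1 ->
      is_tauE (Finfp (R := R) (fun k => pi k)) tau ->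
      (\int[mu]_(x in Fp (R := R) s (pi s) `&` cube (ms s) m0) (W n x)%:E
        = ((2 ^- s) * tau_hat tau n (ms s) m0 (2 * ms s + 1))%:E)%E).
Proof.
pose l0 : 'I_d := Ordinal (leq_trans (isT : (0 < 2)%N) hd).
split=> [s|pi s] n m0 tau; rewrite addn1.
- exact: (@integral_W_Fp_cube R d l0 mu mu1 mu_inv (fun s => id)).
- exact: (@integral_W_Fp_cube R d l0 mu mu1 mu_inv (fun k => pi k)).
Qed.
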